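(* Let $k\ge 0$ be an integer and let $T$ be a regular tournament of order $2k+1$ (every vertex has in-degree and out-degree equal to $k$). Then $\Delta(T)=k$. Furthermore, for any ordering $\sigma$ of $V(T)$, if $u$ and $v$ denote respectively the first and the last vertex of $\sigma$, then $d_\sigma(u)=d_\sigma(v)=k$.
   Context: A tournament is a digraph with exactly one arc between each pair of distinct vertices. An ordering $\sigma=\langle v_1,\dots,v_n\rangle$ of $V(T)$ is a linear order of the vertices; an arc $(v_i,v_j)$ is backward in $\sigma$ if $j<i$ and forward otherwise. For a vertex $v$, $d_\sigma(v)$ is the number of backward arcs of $\sigma$ incident to $v$ (as head or tail). $\Delta_\sigma(T)=\max_{v\in V(T)} d_\sigma(v)$, and the degreewidth of $T$ is $\Delta(T)=\min_\sigma \Delta_\sigma(T)$, the minimum over all orderings $\sigma$ of $V(T)$. *)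

From mathcomp Require Import all_boot.
Set Implicit Arguments. Unset Strict Implicit. Unset Printing Implicit Defensive.

Definition is_tournament (V : finType) (arc : rel V) : Prop :=
  (forall x, ~~ arc x x) /\
  (forall x y, x != y -> arc x y (+) arc y x).

Definition outdeg (V : finType) (arc : rel V) (v : V) : nat := #|[set w | arc v w]|.
Definition indeg (V : finType) (arc : rel V) (v : V) : nat := #|[set w | arc w v]|.

Definition regular_tournament (V : finType) (arc : rel V) (k : nat) : Prop :=
  is_tournament arc /\ forall v, outdeg arc v = k /\ indeg arc v = k.

(* An ordering sigma of V is a bijection from V to positions 'I_#|V|:
   pos v is the (0-based) position of v in sigma. *)
Definition is_ordering (V : finType) (pos : {ffun V -> 'I_#|V|}) : bool :=
  injectiveb pos.

Definition backward (V : finType) (arc : rel V) (pos : {ffun V -> 'I_#|V|}) (x y : V) : bool :=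
  arc x y && (pos y < pos x).

Definition dsigma (V : finType) (arc : rel V) (pos : {ffun V -> 'I_#|V|}) (v : V) : nat :=
  #|[set w | backward arc pos v w || backward arc pos w v]|.

Definition Deltasigma (V : finType) (arc : rel V) (pos : {ffun V -> 'I_#|V|}) : nat :=
  \max_(v : V) dsigma arc pos v.

(* degreewidth: minimum over all orderings of Delta_sigma
   (every Delta_sigma is <= #|V|, so #|V| is a neutral initial value) *)
Definition degreewidth (V : finType) (arc : rel V) : nat :=
  \big[minn/#|V|]_(pos : {ffun V -> 'I_#|V|} | is_ordering pos) Deltasigma arc pos.

(* The first vertex of any ordering is incident only to backward arcs that end
   at it, so its degree in the ordering is its in-degree; symmetrically the
   last vertex has degree its out-degree. In a regular tournament both are k,
   whence Delta_sigma >= k for every ordering. Conversely, take an ordering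
   with the fewest backward arcs. Moving a vertex v to the front only changes
   the arcs at v, replacing the d_sigma(v) backward arcs at v by indeg v = k
   of them; by minimality d_sigma(v) <= k. *)

From mathcomp Require Import all_boot.
From mathcomp Require Import zify.

Set Implicit Arguments.
Unset Strict Implicit.
Unset Printing Implicit Defensive.

Lemma bigmin_leq (I : finType) (P : pred I) (F : I -> nat) x i :
  P i -> \big[minn/x]_(j | P j) F j <= F i.
Proof.
move=> Pi; rewrite -big_filter.
have : i \in filter P (index_enum I) by rewrite mem_filter Pi mem_index_enum.
elim: (filter P _) => //= j s IH; rewrite big_cons inE => /predU1P [<-|/IH].
  exact: geq_minl.
exact: leq_trans (geq_minr _ _).
Qed.

Lemma leq_bigmin (I : finType) (P : pred I) (F : I -> nat) x m :
  m <= x -> (forall i, P i -> m <= F i) -> m <= \big[minn/x]_(j | P j) F j.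
Proof.
move=> le_m_x le_m_F; elim/big_ind: _ => // a b ha hb.
by rewrite leq_min ha hb.
Qed.

Definition shift_below (c n : nat) : nat := n + (n < c).

Lemma ltn_shift_below c a b : a != c -> b != c ->
  (shift_below c a < shift_below c b) = (a < b).
Proof.
rewrite /shift_below => /eqP ? /eqP ?.
by case: (ltnP a c); case: (ltnP b c) => ? ? /=; lia.
Qed.

Lemma shift_below_inj c a b : a != c -> b != c ->
  shift_below c a = shift_below c b -> a = b.
Proof.
move=> ac bc e; case: (ltngtP a b) => //.
  by rewrite -(ltn_shift_below ac bc) e ltnn.
by rewrite -(ltn_shift_below bc ac) e ltnn.
Qed.

Lemma shift_below_gt0 c a : a != c -> 0 < shift_below c a.
Proof.
rewrite /shift_below => ne.
case: (ltnP a c) => [_ | le_ca]; first by rewrite addn1.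
by rewrite addn0 (leq_ltn_trans (leq0n c)) // ltn_neqAle eq_sym ne.
Qed.

Lemma shift_below_lt c a n : c < n -> a < n -> shift_below c a < n.
Proof.
rewrite /shift_below => lt_cn lt_an.
case: (ltnP a c) => [lt_ac | _]; rewrite ?addn1 ?addn0 //.
exact: leq_ltn_trans lt_ac lt_cn.
Qed.

Section Orderings.

Variables (V : finType) (arc : rel V).
Hypothesis arc_irr : irreflexive arc.

Implicit Types (pos : {ffun V -> 'I_#|V|}) (u v w : V).

Definition nbackward pos : nat := \sum_x \sum_y backward arc pos x y.

Lemma backward_irr pos v : backward arc pos v v = false.
Proof. by rewrite /backward ltnn andbF. Qed.

Lemma dsigma_sum pos v :
  dsigma arc pos v = \sum_w (backward arc pos v w + backward arc pos w v).
Proof.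
rewrite /dsigma cardsE -sum1_card big_mkcond /=.
apply: eq_bigr => w _; rewrite unfold_in /= /backward.
by case: (arc v w); case: (arc w v); case: ltngtP.
Qed.

Lemma nbackward_split pos v : nbackward pos =
  \sum_(x | x != v) \sum_(y | y != v) backward arc pos x y + dsigma arc pos v.
Proof.
have drop_v x : \sum_y backward arc pos x y
    = backward arc pos x v + \sum_(y | y != v) backward arc pos x y.
  by rewrite (bigD1 v).
rewrite /nbackward (eq_bigr _ (fun x _ => drop_v x)) (bigD1 v) //= backward_irr.
rewrite big_split /= dsigma_sum big_split /=.
rewrite [\sum_w backward arc pos v w](bigD1 v) //= backward_irr.
rewrite [\sum_w backward arc pos w v](bigD1 v) //= backward_irr; lia.
Qed.

Lemma ordering_inj pos : is_ordering pos -> forall u v,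
  val (pos u) = val (pos v) -> u = v.
Proof. by move=> /injectiveP inj u v /val_inj /inj. Qed.

Lemma ordering_neq pos v w : is_ordering pos -> w != v -> (pos w : nat) != pos v.
Proof. by move=> ord; apply: contra => /eqP /(ordering_inj ord) ->. Qed.

Lemma dsigma_first pos u : is_ordering pos -> val (pos u) = 0 ->
  dsigma arc pos u = indeg arc u.
Proof.
move=> ord /= pu; rewrite /dsigma /indeg; apply: eq_card => w.
rewrite !inE /backward pu ltn0 andbF /=.
have [->|nwu] := eqVneq w u; first by rewrite arc_irr.
by rewrite lt0n -pu ordering_neq // andbT.
Qed.

Lemma dsigma_last pos u : is_ordering pos -> val (pos u) = #|V|.-1 ->
  dsigma arc pos u = outdeg arc u.
Proof.
move=> ord /= pu; rewrite /dsigma /outdeg; apply: eq_card => w.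
have pw_lt := ltn_ord (pos w).
have pw_le : pos w <= #|V|.-1 by rewrite -ltnS prednK // (leq_ltn_trans _ pw_lt).
rewrite !inE /backward pu [#|V|.-1 < _]ltnNge pw_le andbF orbF.
have [->|nwu] := eqVneq w u; first by rewrite arc_irr.
have := ordering_neq ord nwu; rewrite pu => ne.
by rewrite ltn_neqAle ne pw_le !andbT.
Qed.

Lemma ordering_has_first pos : is_ordering pos -> 0 < #|V| ->
  exists u, val (pos u) = 0.
Proof.
move=> /injectiveP inj V_gt0.
have : Ordinal V_gt0 \in codom pos by apply: inj_card_onto; rewrite ?card_ord.
by case/codomP => u pu; exists u; rewrite -pu.
Qed.

Definition front_pos pos v w : nat :=
  if w == v then 0 else shift_below (pos v) (pos w).

Lemma front_pos_lt pos v w : front_pos pos v w < #|V|.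
Proof.
rewrite /front_pos; case: eqP => _; last exact: shift_below_lt.
exact: leq_ltn_trans (ltn_ord (pos w)).
Qed.

Definition move_to_front pos v : {ffun V -> 'I_#|V|} :=
  [ffun w => Ordinal (front_pos_lt pos v w)].

Lemma move_to_front_first pos v : val (move_to_front pos v v) = 0.
Proof. by rewrite ffunE /= /front_pos eqxx. Qed.

Lemma move_to_front_ordering pos v :
  is_ordering pos -> is_ordering (move_to_front pos v).
Proof.
move=> ord; apply/injectiveP => x y /(congr1 val); rewrite !ffunE /= /front_pos.
have [-> | xv] := eqVneq x v; have [-> | yv] := eqVneq y v => //.
- by move=> e; have := shift_below_gt0 (ordering_neq ord yv); rewrite -e.
- by move=> e; have := shift_below_gt0 (ordering_neq ord xv); rewrite e.
move/(shift_below_inj (ordering_neq ord xv) (ordering_neq ord yv)) => e.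
by apply: (ordering_inj ord).
Qed.

Lemma backward_move_to_front pos v x y : is_ordering pos -> x != v -> y != v ->
  backward arc (move_to_front pos v) x y = backward arc pos x y.
Proof.
move=> ord xv yv; rewrite /backward !ffunE /= /front_pos (negbTE xv) (negbTE yv).
by rewrite ltn_shift_below // ordering_neq.
Qed.

Lemma nbackward_move_to_front pos v : is_ordering pos ->
  nbackward (move_to_front pos v) + dsigma arc pos v
  = nbackward pos + dsigma arc (move_to_front pos v) v.
Proof.
move=> ord.
rewrite (nbackward_split (move_to_front pos v) v) (nbackward_split pos v).
under eq_bigr => x xv do under eq_bigr => y yv do
  rewrite backward_move_to_front //.
lia.
Qed.

Lemma dsigma_le_indeg_of_min pos v : is_ordering pos ->
  (forall pos', is_ordering pos' -> nbackward pos <= nbackward pos') ->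
  dsigma arc pos v <= indeg arc v.
Proof.
move=> ord pos_min; have ord' := move_to_front_ordering v ord.
have := nbackward_move_to_front v ord; have := pos_min _ ord'.
by rewrite (dsigma_first ord' (move_to_front_first pos v)); lia.
Qed.

Lemma exists_nbackward_min : exists2 pos, is_ordering pos &
  forall pos', is_ordering pos' -> nbackward pos <= nbackward pos'.
Proof.
have ord0 : is_ordering [ffun v : V => enum_rank v].
  by apply/injectiveP => x y; rewrite !ffunE; apply: enum_rank_inj.
by case: (arg_minnP nbackward ord0) => pos; exists pos.
Qed.

End Orderings.

Theorem mainTheorem1 (V : finType) (arc : rel V) (k : nat) :
  #|V| = 2 * k + 1 ->
  regular_tournament arc k ->
  degreewidth arc = k /\
  (forall (pos : {ffun V -> 'I_#|V|}), is_ordering pos ->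
     forall u v : V, val (pos u) = 0 -> val (pos v) = #|V|.-1 ->
       dsigma arc pos u = k /\ dsigma arc pos v = k).
Proof.
move=> cardV [[irr _] reg].
have arc_irr : irreflexive arc by move=> x; apply: negbTE.
have d_first pos u : is_ordering pos -> val (pos u) = 0 -> dsigma arc pos u = k.
  by move=> ord pu; rewrite dsigma_first // (reg u).2.
split; last first.
  by move=> pos ord u v pu pv; rewrite d_first // dsigma_last // (reg v).1.
apply/eqP; rewrite eqn_leq; apply/andP; split.
  have [pos ord pos_min] := exists_nbackward_min arc.
  apply: leq_trans (bigmin_leq _ _ ord) _; apply/bigmax_leqP => v _.
  by rewrite -(reg v).2; apply: dsigma_le_indeg_of_min.
apply: leq_bigmin => [|pos ord]; first lia.
have V_gt0 : 0 < #|V| by rewrite cardV addn1.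
have [u pu] := ordering_has_first ord V_gt0.
by rewrite -(d_first pos u ord pu); apply: leq_bigmax.
Qed.
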